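(* Let $X_0$ and $(X_t(a_{1:t}):t\in\{1,\dots,T\},a_{1:t}\in\mathcal{A}_{1:t})$ be potential outcomes with $X_t(a_{1:t})\in\mathcal{X}_t$, let $A_{1:T}$ be random actions with $A_t\in\mathcal{A}_t$, and let $(Y(a_{1:t}):a_{1:t}\in\mathcal{A}_{1:t})$ be real-valued potential outcomes defined jointly with these. Suppose for some $t\in\{1,\dots,T\}$, $a_{1:t}\in\mathcal{A}_{1:t}$, measurable $B_{0:t}=B_0\times\cdots\times B_t\subseteq\mathcal{X}_{0:t}$ and $\underline y,\overline y\in\mathbb{R}$ we have $\mathbb{P}(X_{0:t}(a_{1:t})\in B_{0:t})>0$ and $\mathbb{P}(\underline y\le Y(a_{1:t})\le\overline y\mid X_{0:t}(a_{1:t})\in B_{0:t})=1$. Let $N=\max\{0\le s\le t: A_{1:s}=a_{1:s}\}$ and $$\underline Y=\mathbb{1}(A_{1:t}=a_{1:t})Y(A_{1:t})+\mathbb{1}(A_{1:t}\ne a_{1:t})\underline y,\qquad\overline Y=\mathbb{1}(A_{1:t}=a_{1:t})Y(A_{1:t})+\mathbb{1}(A_{1:t}\ne a_{1:t})\overline y.$$ Then $$\mathbb{E}[\underline Y\mid X_{0:N}(A_{1:N})\in B_{0:N}]\le\mathbb{E}[Y(a_{1:t})\mid X_{0:t}(a_{1:t})\in B_{0:t}]\le\mathbb{E}[\overline Y\mid X_{0:N}(A_{1:N})\in B_{0:N}].$$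
   Context: Horizon $T\ge1$, $\mathcal{X}_t=\mathbb{R}^{d_t}$, finite action spaces $\mathcal{A}_t$; $z_{s:t}=(z_s,\dots,z_t)$ (empty if $s>t$), $\mathcal{X}_{0:t}=\mathcal{X}_0\times\cdots\times\mathcal{X}_t$, $X_{0:t}(a_{1:t})=(X_0,X_1(a_1),\dots,X_t(a_{1:t}))$. Quantities evaluated at the random actions, e.g. $X_{0:N}(A_{1:N})$ and $Y(A_{1:t})$, denote the potential outcome indexed by the realized actions; $X_{0:N}(A_{1:N})\in B_{0:N}$ means $X_s(A_{1:s})\in B_s$ for all $0\le s\le N$. No further causal assumptions (e.g. no unconfoundedness) are made. *)

From HB Require Import structures.
From mathcomp Require Import all_boot all_order all_algebra.
From mathcomp Require Import all_classical all_reals all_analysis.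
Set Implicit Arguments.
Unset Strict Implicit.
Unset Printing Implicit Defensive.
Import Order.TTheory GRing.Theory Num.Theory.
Import numFieldNormedType.Exports.
Local Open Scope classical_set_scope.
Local Open Scope ring_scope.

(* Borel sets of R^n = 'rV[R]_n : sigma-algebra generated by the open sets
   of the (product/max-norm) topology of row vectors. *)
Definition borel_rV (R : realType) (n : nat) : set (set 'rV[R]_n) :=
  <<s @open 'rV[R]_n >>.

Definition measurable_rV (d : measure_display) (Omega : measurableType d)
  (R : realType) (n : nat) (f : Omega -> 'rV[R]_n) : Prop :=
  forall B, borel_rV B -> measurable (f @^-1` B).

(* Action histories: a : forall s, A s ; only coordinates 1..t are used
   for a_{1:t}. *)
Definition hist (A : nat -> finType) := forall s : nat, A s.

Definition prefix_eq (A : nat -> finType) (t : nat) (a b : hist A) : Prop :=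
  forall s : nat, (1 <= s <= t)%N -> a s = b s.

Definition act_hist (A : nat -> finType) (Omega : Type)
  (Act : forall s : nat, Omega -> A s) (w : Omega) : hist A :=
  fun s => Act s w.

Definition agree (A : nat -> finType) (Omega : Type)
  (Act : forall s : nat, Omega -> A s) (a : hist A) (s : nat) (w : Omega)
  : bool :=
  [forall r : 'I_s, Act r.+1 w == a r.+1].

Definition Nidx (A : nat -> finType) (Omega : Type)
  (Act : forall s : nat, Omega -> A s) (a : hist A) (t : nat) (w : Omega)
  : nat :=
  (\max_(s < t.+1 | agree Act a s w) (s : nat))%N.

Definition ev_fixed (R : realType) (A : nat -> finType) (Omega : Type)
  (dim : nat -> nat) (X : forall s : nat, hist A -> Omega -> 'rV[R]_(dim s))
  (B : forall s : nat, set 'rV[R]_(dim s)) (t : nat) (a : hist A) : set Omega :=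
  [set w | forall s : nat, (s <= t)%N -> B s (X s a w)].

Definition ev_random (R : realType) (A : nat -> finType) (Omega : Type)
  (dim : nat -> nat) (X : forall s : nat, hist A -> Omega -> 'rV[R]_(dim s))
  (Act : forall s : nat, Omega -> A s)
  (B : forall s : nat, set 'rV[R]_(dim s)) (t : nat) (a : hist A) : set Omega :=
  [set w | forall s : nat, (s <= Nidx Act a t w)%N ->
                           B s (X s (act_hist Act w) w)].

Definition condP (d : measure_display) (Omega : measurableType d)
  (R : realType) (P : probability Omega R) (F E : set Omega) : R :=
  fine (P (F `&` E)) / fine (P E).

Definition condE (d : measure_display) (Omega : measurableType d)
  (R : realType) (P : probability Omega R) (E : set Omega) (f : Omega -> R) : R :=
  Rintegral P E f / fine (P E).

Definition Ybound (R : realType) (A : nat -> finType) (Omega : Type)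
  (Act : forall s : nat, Omega -> A s) (Y : hist A -> Omega -> R)
  (a : hist A) (t : nat) (y : R) (w : Omega) : R :=
  if agree Act a t w then Y (act_hist Act w) w else y.

From HB Require Import structures.
From mathcomp Require Import all_boot all_order all_algebra.
From mathcomp Require Import all_classical all_reals all_analysis.
From mathcomp Require Import measurable_realfun lra.
Import Order.TTheory GRing.Theory Num.Theory.
Local Open Scope classical_set_scope.
Local Open Scope ring_scope.

(* Let E = {X_{0:t}(a_{1:t}) in B_{0:t}}, F = {X_{0:N}(A_{1:N}) in B_{0:N}}
   and G = {A_{1:t} = a_{1:t}}.  F only constrains coordinates s <= N, where
   A_{1:s} = a_{1:s} and hence X_s(A_{1:s}) = X_s(a_{1:s}); so E is contained
   in F, and F and E agree on G, where N = t.  On G the bounding outcome is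
   Y(a_{1:t}), off G it is the constant.  With H = E `&` G, both conditional
   expectations are therefore averages of Y(a_{1:t}) over H padded with
   extra mass: E `\` H, where ylo <= Y(a_{1:t}) <= yhi almost surely, for the
   fixed event, and the larger F `\` H, carrying the constant ylo (resp. yhi),
   for the random one.  Padding an average with more mass at a value below
   (above) all the others can only lower (raise) it. *)

Lemma mean_pad_le (R : realFieldType) (h u v I J c : R) :
  0 <= h -> 0 <= v -> v <= u -> 0 < h + v -> c * h <= I -> c * v <= J ->
  (I + c * u) / (h + u) <= (I + J) / (h + v).
Proof.
move=> h0 v0 vu hv cI cJ.
rewrite ler_pdivrMr; last by lra.
rewrite mulrAC ler_pdivlMr //.
(* The cross-multiplied difference is (u - v) (I - c h) + (J - c v) (h + u). *)
have p1 : 0 <= (u - v) * (I - c * h) by apply: mulr_ge0; lra.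
have p2 : 0 <= (J - c * v) * (h + u) by apply: mulr_ge0; lra.
nra.
Qed.

Lemma mean_le_pad (R : realFieldType) (h u v I J c : R) :
  0 <= h -> 0 <= v -> v <= u -> 0 < h + v -> I <= c * h -> J <= c * v ->
  (I + J) / (h + v) <= (I + c * u) / (h + u).
Proof.
move=> h0 v0 vu hv Ic Jc.
have := @mean_pad_le R h u v (- I) (- J) (- c) h0 v0 vu hv.
rewrite !mulNr !lerN2 -!opprD !mulNr lerN2; exact.
Qed.

Section RintegralProbability.
Context {d} {T : measurableType d} {R : realType} (P : probability T R).

Lemma fine_measure_setDUK (D H : set T) : measurable D -> measurable H ->
  H `<=` D -> fine (P D) = fine (P H) + fine (P (D `\` H)).
Proof.
move=> mD mH HD; have mDH := measurableD mD mH.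
rewrite -{1}(setDUK HD) measureU // ?fineD ?fin_num_measure //.
exact: setDIK.
Qed.

Lemma Rintegral_setDUK (D H : set T) (f : T -> R) :
  measurable D -> measurable H -> H `<=` D -> measurable_fun D f ->
  P.-integrable H (EFin \o f) -> P.-integrable (D `\` H) (EFin \o f) ->
  Rintegral P D f = Rintegral P H f + Rintegral P (D `\` H) f.
Proof.
move=> mD mH HD mf fH fDH; have mDH := measurableD mD mH.
rewrite /Rintegral -{1}(setDUK HD) integral_setU //.
- by rewrite fineD //; exact: integrable_fin_num.
- by rewrite setDUK //; exact/measurable_EFinP.
- exact/disj_set2P/setDIK.
Qed.

Lemma le_Rintegral_null (D N : set T) (f g : T -> R) :
  measurable D -> measurable N -> P N = 0%E ->
  P.-integrable D (EFin \o f) -> P.-integrable D (EFin \o g) ->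
  (forall x, D x -> ~ N x -> f x <= g x) ->
  Rintegral P D f <= Rintegral P D g.
Proof.
move=> mD mN N0 fi gi fg; have mDN := measurableD mD mN.
have sub : D `\` N `<=` D by move=> x [].
rewrite /Rintegral !(negligible_integral mN mD _ N0) //.
apply: le_Rintegral => //; try exact: integrableS sub _.
by move=> x [Dx Nx]; exact: fg.
Qed.

Lemma condP_eq1_null (E S : set T) : measurable E -> measurable S ->
  (0 < P E)%E -> condP P S E = 1 -> P (E `\` S) = 0%E.
Proof.
move=> mE mS PE_gt0 /divr1_eq; rewrite setIC => PSE.
have mES := measurableD mE mS.
have PE := congr1 fine (measureDI P mE mS).
rewrite fineD ?fin_num_measure // ?PSE in PE; last exact: measurableI.
by rewrite -[P _]fineK ?fin_num_measure //; congr EFin; lra.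
Qed.

Lemma integrable_bounded_null (D N : set T) (f : T -> R) (lo hi : R) :
  measurable D -> measurable N -> P N = 0%E -> measurable_fun D f ->
  (forall x, D x -> ~ N x -> lo <= f x <= hi) -> P.-integrable D (EFin \o f).
Proof.
move=> mD mN N0 mf bnd; have mDN := measurableD mD mN.
have mEf : measurable_fun D (EFin \o f) by exact/measurable_EFinP.
apply/(negligible_integrable mN mD mEf N0).
apply: (le_integrable mDN _ _
  (finite_measure_integrable_cst P (`|lo| + `|hi|) mDN)).
  by apply: measurable_funS mEf => // x [].
move=> x [Dx Nx]; rewrite /= lee_fin [X in _ <= X]ger0_norm ?addr_ge0 //.
have /andP[lof fhi] := bnd x Dx Nx.
rewrite ler_norml; apply/andP; split.
- have := ler_norm (- lo); rewrite normrN; have := normr_ge0 hi; lra.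
- have := ler_norm hi; have := normr_ge0 lo; lra.
Qed.

End RintegralProbability.

Section Padding.
Context {d} {T : measurableType d} {R : realType} (P : probability T R).
Context {E F H N : set T} {f g : T -> R} {c : R}.
Hypotheses (mE : measurable E) (mF : measurable F) (mH : measurable H).
Hypotheses (mN : measurable N) (PN0 : P N = 0%E).
Hypotheses (HE : H `<=` E) (EF : E `<=` F) (PE_gt0 : (0 < P E)%E).
Hypotheses (fint : P.-integrable E (EFin \o f)) (mg : measurable_fun F g).
Hypotheses (gH : forall x, H x -> g x = f x).
Hypothesis (gFH : forall x, F x -> ~ H x -> g x = c).

Let HF : H `<=` F. Proof. by move=> x /HE /EF. Qed.
Let mEH : measurable (E `\` H). Proof. exact: measurableD. Qed.
Let mFH : measurable (F `\` H). Proof. exact: measurableD. Qed.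
Let fH : P.-integrable H (EFin \o f). Proof. exact: integrableS fint. Qed.
Let fEH : P.-integrable (E `\` H) (EFin \o f).
Proof. by apply: integrableS fint => // x []. Qed.

Lemma condE_setDUK : condE P E f =
  (Rintegral P H f + Rintegral P (E `\` H) f) /
  (fine (P H) + fine (P (E `\` H))).
Proof.
rewrite /condE (fine_measure_setDUK P E H mE mH HE).
rewrite (Rintegral_setDUK P E H f mE mH HE) //.
by case/integrableP: fint => /measurable_EFinP.
Qed.

Lemma condE_padE : condE P F g =
  (Rintegral P H f + c * fine (P (F `\` H))) /
  (fine (P H) + fine (P (F `\` H))).
Proof.
have gHf : {in H, f =1 g} by move=> x /set_mem /gH.
have gc : {in F `\` H, cst c =1 g} by move=> x /set_mem [Fx nHx]; rewrite gFH.
rewrite /condE (fine_measure_setDUK P F H mF mH HF).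
rewrite (Rintegral_setDUK P F H g mF mH HF) //.
- by rewrite -(eq_Rintegral P gHf) -(eq_Rintegral P gc) Rintegral_cst.
- by apply: eq_integrable mH _ _ _ fH => x xH /=; rewrite gHf.
- apply: eq_integrable mFH _ _ _ (finite_measure_integrable_cst P c mFH).
  by move=> x xFH /=; rewrite -gc.
Qed.

Let mass_pad : fine (P (E `\` H)) <= fine (P (F `\` H)).
Proof.
apply: fine_le; rewrite ?fin_num_measure //.
by apply: le_measure; rewrite ?inE // => x [/EF Fx nHx].
Qed.

Let mass_gt0 : 0 < fine (P H) + fine (P (E `\` H)).
Proof.
rewrite -(fine_measure_setDUK P E H mE mH HE) fine_gt0 // PE_gt0 /=.
by rewrite ltey_eq fin_num_measure.
Qed.

Lemma condE_pad_le : (forall x, E x -> ~ N x -> c <= f x) ->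
  condE P F g <= condE P E f.
Proof.
move=> cf; rewrite condE_padE condE_setDUK.
apply: mean_pad_le => //; rewrite ?fine_ge0 // -Rintegral_cst //.
- apply: le_Rintegral_null PN0 _ _ _ => //; last by move=> x /HE; exact: cf.
  exact: finite_measure_integrable_cst.
- apply: le_Rintegral_null PN0 _ _ _ => //; last by move=> x [Ex _]; exact: cf.
  exact: finite_measure_integrable_cst.
Qed.

Lemma condE_le_pad : (forall x, E x -> ~ N x -> f x <= c) ->
  condE P E f <= condE P F g.
Proof.
move=> fc; rewrite condE_padE condE_setDUK.
apply: mean_le_pad => //; rewrite ?fine_ge0 // -Rintegral_cst //.
- apply: le_Rintegral_null PN0 _ _ _ => //; last by move=> x /HE; exact: fc.
  exact: finite_measure_integrable_cst.
- apply: le_Rintegral_null PN0 _ _ _ => //; last by move=> x [Ex _]; exact: fc.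
  exact: finite_measure_integrable_cst.
Qed.

End Padding.

Section Agree.
Context {A : nat -> finType} {Omega : Type} {Act : forall s, Omega -> A s}.
Context {a : hist A}.

Lemma agreeP {s w} :
  reflect (forall r, (r < s)%N -> Act r.+1 w = a r.+1) (agree Act a s w).
Proof.
apply: (iffP forallP) => [h r rs | h r]; first exact/eqP/(h (Ordinal rs)).
exact/eqP/h/ltn_ord.
Qed.

Lemma agree_le {s s' w} : (s' <= s)%N -> agree Act a s w -> agree Act a s' w.
Proof.
move=> le /agreeP h; apply/agreeP => r rs; apply: h.
exact: leq_trans rs le.
Qed.

Lemma agree_prefix_eq {s w} :
  agree Act a s w -> prefix_eq s (act_hist Act w) a.
Proof. by move=> /agreeP h [|r] // /andP[_ rs]; exact: h. Qed.

Lemma Nidx_le {t w} : (Nidx Act a t w <= t)%N.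
Proof. by apply/bigmax_leqP => i _; rewrite -ltnS. Qed.

Lemma leq_Nidx {t w s} :
  (s <= t)%N -> (s <= Nidx Act a t w)%N = agree Act a s w.
Proof.
move=> st; apply/idP/idP => [|ag].
  have ag0 : agree Act a (@ord0 t) w by apply/agreeP.
  rewrite /Nidx (bigop.bigmax_eq_arg _ ag0).
  by case: arg_maxnP => // j agj _ sj; exact: agree_le sj agj.
have st1 : (s < t.+1)%N by [].
exact: (@leq_bigmax_cond _ (fun i : 'I_t.+1 => agree Act a i w) val
  (Ordinal st1)).
Qed.

End Agree.

Section Events.
Context {R : realType} {A : nat -> finType} {Omega : Type} {dim : nat -> nat}.
Context {X : forall s, hist A -> Omega -> 'rV[R]_(dim s)}.
Context {Act : forall s, Omega -> A s} {B : forall s, set 'rV[R]_(dim s)}.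
Context {t : nat} {a : hist A}.
Hypothesis hXcons : forall s a b, prefix_eq s a b -> X s a = X s b.

Lemma ev_randomE : ev_random X Act B t a =
  [set w | forall s, (s <= t)%N -> agree Act a s w -> B s (X s a w)].
Proof.
apply/seteqP; split => w /= Fw s.
  move=> st ag; have := Fw s; rewrite leq_Nidx // => /(_ ag).
  by rewrite (hXcons _ _ _ (agree_prefix_eq ag)).
move=> sN; have st := leq_trans sN Nidx_le.
rewrite leq_Nidx // in sN.
by rewrite (hXcons _ _ _ (agree_prefix_eq sN)); exact: Fw.
Qed.

Lemma ev_fixed_sub_random : ev_fixed X B t a `<=` ev_random X Act B t a.
Proof. by move=> w Ew; rewrite ev_randomE => s st _; exact: Ew. Qed.

Lemma ev_random_agree_sub_fixed :
  ev_random X Act B t a `&` [set w | agree Act a t w] `<=` ev_fixed X B t a.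
Proof.
rewrite ev_randomE => w [Fw ag] s st; apply: Fw => //.
exact: agree_le ag.
Qed.

End Events.

Lemma YboundE {R : realType} {A : nat -> finType} {Omega : Type}
    (Act : forall s, Omega -> A s) (Y : hist A -> Omega -> R) (t : nat)
    (a : hist A) (c : R) :
  (forall a b : hist A, prefix_eq t a b -> Y a = Y b) ->
  Ybound Act Y a t c = fun w => if agree Act a t w then Y a w else c.
Proof.
move=> hYcons; apply/funext => w; rewrite /Ybound.
by case: ifP => // /agree_prefix_eq /hYcons ->.
Qed.

Section Measurability.
Context {d : measure_display} {Omega : measurableType d}.

Lemma measurable_forall {p : nat -> Prop} {Q : nat -> set Omega} :
  (forall s, p s -> measurable (Q s)) ->
  measurable [set w | forall s, p s -> Q s w].
Proof.
move=> mQ; rewrite (_ : [set w | _] = \bigcap_(s in p) Q s).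
  exact: bigcap_measurableType.
by apply/seteqP; split => w /= h s; apply: h.
Qed.

Lemma measurable_agree {A : nat -> finType} (Act : forall s, Omega -> A s)
    (a : hist A) (s : nat) :
  (forall r, (r < s)%N -> measurable [set w | Act r.+1 w = a r.+1]) ->
  measurable [set w | agree Act a s w].
Proof.
move=> mAct; rewrite (_ : [set w | _] =
  [set w | forall r, (r < s)%N -> [set w | Act r.+1 w = a r.+1] w]).
  exact: measurable_forall.
by apply/seteqP; split => w /agreeP.
Qed.

End Measurability.

Lemma measurable_ev_random {R : realType} {d : measure_display}
    {Omega : measurableType d} {A : nat -> finType} {dim : nat -> nat}
    {X : forall s, hist A -> Omega -> 'rV[R]_(dim s)}
    {Act : forall s, Omega -> A s} {B : forall s, set 'rV[R]_(dim s)}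
    {t : nat} {a : hist A} :
  (forall s a b, prefix_eq s a b -> X s a = X s b) ->
  (forall s, (s <= t)%N -> measurable [set w | agree Act a s w]) ->
  (forall s, (s <= t)%N -> measurable [set w | B s (X s a w)]) ->
  measurable (ev_random X Act B t a).
Proof.
move=> hXcons mAg mXB; rewrite (ev_randomE hXcons).
rewrite (_ : [set w | _] = [set w | forall s, (s <= t)%N ->
    (~` [set w | agree Act a s w] `|` [set w | B s (X s a w)]) w]).
  apply: measurable_forall => s st; apply: measurableU (mXB s st).
  exact/measurableC/mAg.
apply/seteqP; split => w /= h s st.
  by case: (boolP (agree Act a s w)) => ag; [right; exact: h | left; exact/negP].
by case: (h s st) => //= /negP.
Qed.

Theorem theorem4p4
  (R : realType) (d : measure_display) (Omega : measurableType d)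
  (P : probability Omega R)
  (T : nat) (hT : (1 <= T)%N)
  (dim : nat -> nat) (A : nat -> finType)
  (X : forall s : nat, hist A -> Omega -> 'rV[R]_(dim s))
  (hXcons : forall (s : nat) (a b : hist A), prefix_eq s a b -> X s a = X s b)
  (hXmeas : forall (s : nat) (a : hist A), (s <= T)%N -> measurable_rV (X s a))
  (Act : forall s : nat, Omega -> A s)
  (hAmeas : forall (s : nat) (v : A s), (1 <= s <= T)%N ->
     measurable [set w | Act s w = v])
  (t : nat) (ht : (1 <= t <= T)%N)
  (Y : hist A -> Omega -> R)
  (hYcons : forall a b : hist A, prefix_eq t a b -> Y a = Y b)
  (hYmeas : forall a : hist A, measurable_fun setT (Y a))
  (a : hist A)
  (B : forall s : nat, set 'rV[R]_(dim s))
  (hB : forall s : nat, (s <= t)%N -> borel_rV (B s))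
  (ylo yhi : R)
  (hpos : (0 < P (ev_fixed X B t a))%E)
  (hbnd : condP P [set w | ylo <= Y a w <= yhi] (ev_fixed X B t a) = 1) :
  condE P (ev_random X Act B t a) (Ybound Act Y a t ylo)
    <= condE P (ev_fixed X B t a) (Y a)
  /\ condE P (ev_fixed X B t a) (Y a)
    <= condE P (ev_random X Act B t a) (Ybound Act Y a t yhi).
Proof.
have [_ tT] := andP ht.
set E := ev_fixed X B t a; set F := ev_random X Act B t a.
set G := [set w | agree Act a t w]; set S := [set w | ylo <= Y a w <= yhi].
have mXB s : (s <= t)%N -> measurable [set w | B s (X s a w)].
  by move=> st; apply: (hXmeas s a (leq_trans st tT)); exact: hB.
have mAg s : (s <= t)%N -> measurable [set w | agree Act a s w].
  move=> st; apply: measurable_agree => r rs; apply: hAmeas.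
  by rewrite /= (leq_trans rs (leq_trans st tT)).
have mE : measurable E := measurable_forall mXB.
have mF : measurable F := measurable_ev_random hXcons mAg mXB.
have mH : measurable (E `&` G) := measurableI _ _ mE (mAg t (leqnn t)).
have mS : measurable S.
  rewrite (_ : S = Y a @^-1` `[ylo, yhi]); last first.
    by apply/seteqP; split => w /=; rewrite in_itv.
  by rewrite -[_ @^-1` _]setTI; exact: hYmeas.
have mN := measurableD mE mS.
have PN0 : P (E `\` S) = 0%E by apply: condP_eq1_null hbnd.
have Y_bnd x : E x -> ~ (E `\` S) x -> ylo <= Y a x <= yhi.
  by move=> Ex NSx; apply: contrapT => nSx; exact: NSx.
have Yint : P.-integrable E (EFin \o Y a).
  apply: integrable_bounded_null mN PN0 _ Y_bnd => //.
  exact: measurable_funTS.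
have HE : E `&` G `<=` E by move=> x [].
have EF : E `<=` F := ev_fixed_sub_random hXcons.
have FGE : F `&` G `<=` E := ev_random_agree_sub_fixed hXcons.
have mg c : measurable_fun F (fun w => if agree Act a t w then Y a w else c).
  apply/measurable_funTS/measurable_fun_ifT => //.
  by apply: (measurable_fun_bool true); rewrite setTI; exact: mAg.
have gH c x : (E `&` G) x -> (if agree Act a t x then Y a x else c) = Y a x.
  by case=> _ ->.
have gFH c x : F x -> ~ (E `&` G) x ->
    (if agree Act a t x then Y a x else c) = c.
  move=> Fx nHx; case: ifP => // ag; exfalso; apply: nHx.
  by split => //; exact: FGE.
rewrite !YboundE //; split.
- apply: (condE_pad_le P mE mF mH mN PN0 HE EF hpos Yint (mg ylo) (gH ylo)
    (gFH ylo)).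
  by move=> x Ex /(Y_bnd x Ex) /andP[].
- apply: (condE_le_pad P mE mF mH mN PN0 HE EF hpos Yint (mg yhi) (gH yhi)
    (gFH yhi)).
  by move=> x Ex /(Y_bnd x Ex) /andP[].
Qed.
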